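(* For every $n\in\mathbb{N}$, \[ \mathcal{M}^{(2)}(n)=\min_{1\le s\le t\le n}\mathcal{M}^{(2)}(n,s,t)=\Bigl\lfloor\frac{n^2-10n+33}{44}\Bigr\rfloor, \] i.e. this is the minimal number of monochromatic generalized Schur triples $(x,y,x+2y)$ attainable under a $2$-coloring of $\{1,\dots,n\}$ of the form $R^sB^{t-s}R^{n-t}$.
   Context: For real $a>0$ and integers $1\le s\le t\le n$, $\mathcal{M}^{(a)}(n,s,t)$ is the number of ordered triples $T=(x,y,x+\lfloor ay\rfloor)\in\{1,\dots,n\}^3$ such that $T\in(\{1,\dots,s\}\cup\{t+1,\dots,n\})^3$ or $T\in\{s+1,\dots,t\}^3$ (i.e. monochromatic triples under the coloring $R^sB^{t-s}R^{n-t}$, which colors $1..s$ and $t+1..n$ red and $s+1..t$ blue). *)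

From mathcomp Require Import all_boot all_order all_algebra.
From mathcomp Require Import reals.
Set Implicit Arguments. Unset Strict Implicit. Unset Printing Implicit Defensive.
Import Order.TTheory GRing.Theory Num.Theory.

Local Open Scope ring_scope.

Definition is_red (n s t : nat) (z : int) : bool :=
  ((1 <= z) && (z <= s%:Z)) || ((t%:Z < z) && (z <= n%:Z)).
Definition is_blue (s t : nat) (z : int) : bool :=
  (s%:Z < z) && (z <= t%:Z).

(* Monochromatic triple T = (x, y, x + floor(a y)); x, y range over {1..n}
   and the third coordinate must also lie in {1..n} (implied by the
   colour-class membership). *)
Definition mono_triple (R : realType) (a : R) (n s t x y : nat) : bool :=
  let z := (x%:Z + Num.floor (a * y%:R))%R in
  (is_red n s t x%:Z && is_red n s t y%:Z && is_red n s t z)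
  || (is_blue s t x%:Z && is_blue s t y%:Z && is_blue s t z).

Definition Mcount (R : realType) (a : R) (n s t : nat) : nat :=
  (\sum_(1 <= x < n.+1) \sum_(1 <= y < n.+1) mono_triple a n s t x y)%N.

From mathcomp Require Import all_boot all_order all_algebra zify ring.
From mathcomp Require Import reals.
Import Order.TTheory GRing.Theory Num.Theory.
Set Implicit Arguments. Unset Strict Implicit. Unset Printing Implicit Defensive.

(* Keeping only the triples that lie
   in one of four blocks (x, y, x + 2y all in [1, s]; y in [1, s] and x, x + 2y in
   (t, n]; all three in (s, t]; all three in (t, n]) bounds M(n, s, t) from below,
   with equality as soon as 3s <= t and n < 2t + 3.  A block contributes
   sum_{y <= m} (c - 2y)_+, about c^2/4, so the bound is a quadratic form in
   s, t - 3s and n - t; the Cauchy-Schwarz inequality with weights (3, 1, 1)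
   turns it into (n - 5)^2/44 up to rounding, and the degenerate configurations
   (t < 3s, or n - t > 2s + 2) are settled by direct polynomial estimates.  The
   minimum is attained for s ~ 3n/11 and t - 3s ~ n - t ~ n/11. *)

Definition is_redn (n s t k : nat) : bool := (0 < k <= s) || (t < k <= n).
Definition is_bluen (s t k : nat) : bool := s < k <= t.

Definition mono2 (n s t x y : nat) : bool :=
  (is_redn n s t x && is_redn n s t y && is_redn n s t (x + 2 * y))
  || (is_bluen s t x && is_bluen s t y && is_bluen s t (x + 2 * y)).

Section Floor.
Local Open Scope ring_scope.

Lemma floor_natmul2 (R : realType) (y : nat) : Num.floor ((2%:R : R) * y%:R) = (2 * y)%N%:Z.
Proof. by rewrite -natrM -[(2 * y)%N%:R]/((2 * y)%N%:Z%:~R) intrKfloor. Qed.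

Lemma mono_triple2E (R : realType) (n s t x y : nat) :
  mono_triple (2%:R : R) n s t x y = mono2 n s t x y.
Proof.
by rewrite /mono_triple /mono2 floor_natmul2 -PoszD /is_red /is_blue !lez_nat !ltz_nat.
Qed.

End Floor.

Lemma Mcount2E (R : realType) (n s t : nat) :
  Mcount (2%:R : R) n s t = \sum_(1 <= y < n.+1) \sum_(1 <= x < n.+1) mono2 n s t x y.
Proof.
rewrite /Mcount exchange_big; apply: eq_bigr => y _; apply: eq_bigr => x _.
by rewrite mono_triple2E.
Qed.

Lemma Mcount_small (R : realType) (n s t : nat) :
  s <= t <= n -> n < 3 -> Mcount (2%:R : R) n s t = 0.
Proof.
move=> le_stn n_lt3; rewrite Mcount2E big_nat big1 // => y /andP[y_gt0 _].
rewrite big_nat big1 // => x /andP[x_gt0 _].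
by rewrite /mono2 /is_redn /is_bluen; lia.
Qed.

(* The number of pairs (x, y) with 1 <= x, 1 <= y <= m and x + 2y <= c:
   the subtraction is truncated. *)
Definition npairs (m c : nat) : nat := \sum_(1 <= y < m.+1) (c - 2 * y).

Lemma npairs0n c : npairs 0 c = 0.
Proof. by rewrite /npairs big_geq. Qed.

Lemma npairsn0 m : npairs m 0 = 0.
Proof. by rewrite /npairs big1. Qed.

Lemma npairsS m c : npairs m.+1 c = npairs m c + (c - 2 * m.+1).
Proof. by rewrite /npairs big_nat_recr. Qed.

Lemma npairs_lin_lb m c : m * c <= npairs m c + m * m.+1.
Proof. by elim: m => [|m IHm]; rewrite ?npairs0n ?npairsS; nia. Qed.

Lemma npairs_full m c : 2 * m <= c -> npairs m c + m * m.+1 = m * c.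
Proof.
by elim: m => [|m IHm] le_2m_c; rewrite ?npairs0n ?npairsS; [|move: (IHm ltac:(lia))]; nia.
Qed.

Lemma npairs_closed m c : c <= 2 * m + 2 -> 4 * npairs m c + 2 * c = c ^ 2 + odd c.
Proof.
elim: m => [|m IHm] le_c; first by rewrite npairs0n; case: c le_c => [|[|[|]]].
rewrite npairsS; have [le_c' | lt_c'] := leqP c (2 * m + 2).
  by move: (IHm le_c'); lia.
have := npairs_full (m := m) (c := c) ltac:(lia).
have [->|->] : c = 2 * m + 3 \/ c = 2 * m + 4 by lia.
all: lia.
Qed.

Lemma npairs_sq_lb m c : c <= 2 * m + 2 -> c ^ 2 <= 4 * npairs m c + 2 * c.
Proof. by move/npairs_closed; lia. Qed.

Lemma sum_window_indicator m a k c :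
  \sum_(1 <= x < m.+1) ((a < x) && (x + k <= c)) = minn (c - k) m - minn a m.
Proof.
elim: m => [|m IHm]; first by rewrite big_geq //; lia.
by rewrite big_nat_recr //= IHm; lia.
Qed.

Lemma sum_range_indicator n lo hi (F : nat -> nat) : lo <= hi <= n ->
  \sum_(1 <= y < n.+1) (lo < y <= hi) * F y = \sum_(1 <= i < (hi - lo).+1) F (i + lo).
Proof.
move=> /andP[le_lo_hi le_hi_n].
rewrite -subSn // -(big_addn 1 hi.+1 lo xpredT F) add1n (@big_nat_widenl _ _ _ lo.+1 1) //.
rewrite (@big_nat_widen _ _ _ 1 hi.+1 n.+1) // big_mkcond /=.
by apply: eq_big_nat => y _; rewrite mulnbl andbC.
Qed.

Definition strip (lo hi a c x y : nat) : bool := [&& lo < y <= hi, a < x & x + 2 * y <= c].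

Lemma sum_strip n lo hi a c : lo <= hi <= n -> c <= n ->
  \sum_(1 <= y < n.+1) \sum_(1 <= x < n.+1) strip lo hi a c x y
  = npairs (hi - lo) (c - a - 2 * lo).
Proof.
move=> le_lo_hi_n le_c_n.
rewrite (eq_bigr (fun y => (lo < y <= hi) * (c - 2 * y - a))) => [|y _]; last first.
  under eq_bigr do rewrite /strip -mulnb.
  by rewrite -big_distrr /= sum_window_indicator; congr (_ * _); lia.
by rewrite sum_range_indicator //; apply: eq_bigr => i _; lia.
Qed.

Definition block_count (n s t : nat) : nat :=
  npairs s s + npairs s (n - t) + npairs (t - s) (t - 3 * s) + npairs (n - t) (n - 3 * t).

Definition in_blocks (n s t x y : nat) : nat :=
  strip 0 s 0 s x y + strip 0 s t n x y + strip s t s t x y + strip t n t n x y.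

Lemma sum_in_blocks n s t : s <= t <= n ->
  \sum_(1 <= y < n.+1) \sum_(1 <= x < n.+1) in_blocks n s t x y = block_count n s t.
Proof.
move=> le_stn; under eq_bigr do rewrite !big_split.
rewrite !big_split !sum_strip /block_count; try lia.
by congr (_ + _ + _ + _); congr npairs; lia.
Qed.

Lemma in_blocks_le_mono n s t x y : s <= t -> in_blocks n s t x y <= mono2 n s t x y.
Proof.
rewrite /in_blocks /strip /mono2 /is_redn /is_bluen => le_st.
by case: (leqP y s) => ?; case: (leqP y t) => ?; case: (leqP x s) => ?; case: (leqP x t) => ?;
  rewrite /= ?andbT ?andbF ?orbF ?orbT /=; lia.
Qed.

(* A red triple outside the blocks would need x, y <= s < t < x + 2y, excluded
   by 3s <= t, or x <= s < t < y, whence x + 2y >= 2t + 3 > n. *)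
Lemma mono_eq_in_blocks n s t x y : 3 * s <= t -> n < 2 * t + 3 ->
  mono2 n s t x y = in_blocks n s t x y :> nat.
Proof.
rewrite /in_blocks /strip /mono2 /is_redn /is_bluen => le_3s_t lt_n_2t.
by case: (leqP y s) => ?; case: (leqP y t) => ?; case: (leqP x s) => ?; case: (leqP x t) => ?;
  rewrite /= ?andbT ?andbF ?orbF ?orbT /=; lia.
Qed.

Lemma block_count_le_Mcount (R : realType) n s t : s <= t <= n ->
  block_count n s t <= Mcount (2%:R : R) n s t.
Proof.
move=> le_stn; rewrite Mcount2E -sum_in_blocks //.
by apply: leq_sum => y _; apply: leq_sum => x _; apply: in_blocks_le_mono; case/andP: le_stn.
Qed.

Lemma Mcount_block_count (R : realType) n s t : s <= t <= n -> 3 * s <= t -> n < 2 * t + 3 ->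
  Mcount (2%:R : R) n s t = block_count n s t.
Proof.
move=> le_stn le_3s_t lt_n_2t; rewrite Mcount2E -sum_in_blocks //.
by apply: eq_bigr => y _; apply: eq_bigr => x _; apply: mono_eq_in_blocks.
Qed.

Section WeightedSquares.
Local Open Scope ring_scope.

Lemma sqr_weighted_sum_le (R : realDomainType) (x y z : R) :
  (3 * x + y + z) ^+ 2 <= 11 * (x ^+ 2 + y ^+ 2 + z ^+ 2).
Proof.
rewrite -subr_ge0 (_ : _ - _ = (x - 3 * y) ^+ 2 + (x - 3 * z) ^+ 2 + (y - z) ^+ 2); last by ring.
by rewrite !addr_ge0 ?sqr_ge0.
Qed.

End WeightedSquares.

(* Shifted by one, npairs_sq_lb reads (c - 1)^2 <= 4 npairs m c + 1, and
   3 (s - 1) + (c - 1) + (d - 1) = n - 5. *)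
Lemma block_count_lb_balanced s c d : d <= 2 * s + 2 ->
  (3 * s + c + d) ^ 2
  <= 44 * block_count (3 * s + c + d) s (3 * s + c) + 10 * (3 * s + c + d) + 10.
Proof.
move=> le_d; rewrite /block_count !addKn.
have hA : s ^ 2 <= 4 * npairs s s + 2 * s by apply: npairs_sq_lb; lia.
have hB : d ^ 2 <= 4 * npairs s d + 2 * d by apply: npairs_sq_lb.
have hC : c ^ 2 <= 4 * npairs (3 * s + c - s) c + 2 * c by apply: npairs_sq_lb; lia.
by have := sqr_weighted_sum_le (s%:Z - 1) (c%:Z - 1) (d%:Z - 1); lia.
Qed.

Lemma block_count_lb_short_blue s e d : e < 2 * s -> d <= 2 * s + 2 -> 5 <= s + e + d ->
  (s + e + d) ^ 2 <= 44 * block_count (s + e + d) s (s + e) + 10 * (s + e + d) + 10.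
Proof.
move=> lt_e le_d n_ge5; rewrite /block_count !addKn.
have hA : s ^ 2 <= 4 * npairs s s + 2 * s by apply: npairs_sq_lb; lia.
have hB : d ^ 2 <= 4 * npairs s d + 2 * d by apply: npairs_sq_lb.
have := sqr_weighted_sum_le (s%:Z - 1) 0 (d%:Z - 1).
have : (((s + e + d)%N%:Z - 5) ^+ 2 <= (3 * s%:Z + d%:Z - 4) ^+ 2)%R.
  by apply: lerXn2r; rewrite ?nnegrE; lia.
lia.
Qed.

Lemma block_count_lb_long_red n s t : 0 < s <= t -> t <= n -> 2 * s + 2 < n - t ->
  n ^ 2 <= 44 * block_count n s t + 10 * n + 10.
Proof.
move=> /andP[s_gt0 le_st] le_tn.
have [d ->] : exists d, n = t + d by exists (n - t); lia.
rewrite /block_count addKn => d_large.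
have hA : s ^ 2 <= 4 * npairs s s + 2 * s by apply: npairs_sq_lb; lia.
have hB := npairs_lin_lb s d.
have [le_3s_t | lt_t_3s] := leqP (3 * s) t.
- have [c def_t] : exists c, t = 3 * s + c by exists (t - 3 * s); lia.
  rewrite {}def_t addKn in d_large *.
  have hC : c ^ 2 <= 4 * npairs (3 * s + c - s) c + 2 * c by apply: npairs_sq_lb; lia.
  have [le_2t_d | lt_d_2t] := leqP (2 * (3 * s + c)) d.
  + have [w def_d] : exists w, d = 2 * (3 * s + c) + w by exists (d - 2 * (3 * s + c)); lia.
    rewrite {}def_d in d_large hB *.
    rewrite (_ : 3 * s + c + (2 * (3 * s + c) + w) - 3 * (3 * s + c) = w); last lia.
    have hD : w ^ 2 <= 4 * npairs (2 * (3 * s + c) + w) w + 2 * w by apply: npairs_sq_lb; lia.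
    (* The difference of the two sides is at least 150 s^2 + 26 s w + 34 s c
       + 2 (c - 2 w)^2 + 2 c w + 2 w^2 + 24 s + 8 c - 12 w + 10. *)
    have : (0 <= (c%:Z - 2 * w%:Z) ^+ 2)%R by apply: sqr_ge0.
    have := leq_pmull w s_gt0; have : 0 <= s * c by []; have : 0 <= c * w by [].
    by clear -hA hB hC hD; lia.
  + have : (0 <= (d%:Z - 2 * s%:Z) * (6 * s%:Z + 2 * c%:Z - d%:Z))%R by apply: mulr_ge0; lia.
    by clear -s_gt0 hA hB hC d_large lt_d_2t; nia.
- have [e def_t] : exists e, t = s + e by exists (t - s); lia.
  rewrite {}def_t in lt_t_3s d_large *.
  have [le_2t_d | lt_d_2t] := leqP (2 * (s + e)) d.
  + have [w def_d] : exists w, d = 2 * (s + e) + w by exists (d - 2 * (s + e)); lia.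
    rewrite {}def_d in d_large hB *.
    rewrite (_ : s + e + (2 * (s + e) + w) - 3 * (s + e) = w); last lia.
    have hD : w ^ 2 <= 4 * npairs (2 * (s + e) + w) w + 2 * w by apply: npairs_sq_lb; lia.
    by clear -s_gt0 lt_t_3s hA hB hD; nia.
  + by clear -s_gt0 lt_t_3s hA hB d_large lt_d_2t; nia.
Qed.

Lemma block_count_lb n s t : 0 < s <= t -> t <= n ->
  n ^ 2 <= 44 * block_count n s t + 10 * n + 10.
Proof.
move=> lt0st le_tn; case/andP: (lt0st) => s_gt0 le_st.
have [n_le10 | n_gt10] := leqP n 10; first by nia.
have [d_large | d_small] := ltnP (2 * s + 2) (n - t).
  exact: block_count_lb_long_red lt0st le_tn d_large.
have [d def_n] : exists d, n = t + d by exists (n - t); lia.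
rewrite {}def_n addKn in n_gt10 d_small *.
have [le_3s_t | lt_t_3s] := leqP (3 * s) t.
- have [c ->] : exists c, t = 3 * s + c by exists (t - 3 * s); lia.
  exact: block_count_lb_balanced.
- have [e def_t] : exists e, t = s + e by exists (t - s); lia.
  by rewrite {}def_t in lt_t_3s n_gt10 *; apply: block_count_lb_short_blue; lia.
Qed.

Lemma Mcount_lb (R : realType) n s t : 0 < s <= t -> t <= n ->
  (n ^ 2 + 33 - 10 * n) %/ 44 <= Mcount (2%:R : R) n s t.
Proof.
move=> le_st le_tn; have := block_count_lb le_st le_tn.
by have := @block_count_le_Mcount R n s t; lia.
Qed.

(* [3 <= n] forces [n <= 3 t], so that the last block is empty. *)
Lemma Mcount_balanced (R : realType) n s t c d :
  t = 3 * s + c -> n = t + d -> 3 <= n -> d <= 2 * s + 2 -> d < t + 3 ->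
  4 * Mcount (2%:R : R) n s t + 2 * (s + c + d)
  = s ^ 2 + c ^ 2 + d ^ 2 + (odd s + odd c + odd d).
Proof.
move=> def_t def_n n_ge3 le_d lt_d.
rewrite Mcount_block_count /block_count; try lia.
rewrite def_n def_t !addKn (_ : 3 * s + c + d - 3 * (3 * s + c) = 0) ?npairsn0; last lia.
have := @npairs_closed s s; have := @npairs_closed s d.
by have := @npairs_closed (3 * s + c - s) c; lia.
Qed.

(* Entry r is (a, b, e) with 3a + b + e = r: for n = 11k + r the minimum is
   attained at s = 3k + a, t - 3s = k + b and n - t = k + e. *)
Definition opt_offsets : seq (nat * nat * nat) :=
  [:: (0, 0, 0); (0, 0, 1); (0, 1, 1); (1, 0, 0); (1, 0, 1); (1, 1, 1);
      (1, 1, 2); (2, 0, 1); (2, 1, 1); (2, 1, 2); (2, 2, 2)].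

Lemma opt_offsets_sum : [seq 3 * abe.1.1 + abe.1.2 + abe.2 | abe <- opt_offsets] = iota 0 11.
Proof. by []. Qed.

Lemma Mcount_lb_attained (R : realType) n : 3 <= n -> exists s t,
  [/\ 1 <= s, s <= t, t <= n & Mcount (2%:R : R) n s t = (n ^ 2 + 33 - 10 * n) %/ 44].
Proof.
move=> n_ge3; have r_lt11 : n %% 11 < 11 by rewrite ltn_mod.
have := congr1 (nth 0 ^~ (n %% 11)) opt_offsets_sum.
rewrite [LHS](nth_map (0, 0, 0)) // nth_iota //.
have := mem_nth (0, 0, 0) (r_lt11 : n %% 11 < size opt_offsets).
case: (nth _ _ _) => [[a b] e] /= abe_in sum_abe.
have def_n : n = 3 * (3 * (n %/ 11) + a) + (n %/ 11 + b) + (n %/ 11 + e).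
  by move: (divn_eq n 11); lia.
move: (n %/ 11) def_n => k def_n.
exists (3 * k + a), (3 * (3 * k + a) + (k + b)).
have /allP/(_ _ abe_in) /= e_le2 : all (fun abe => abe.2 <= 2) opt_offsets by [].
have le_d : k + e <= 2 * (3 * k + a) + 2 by lia.
have lt_d : k + e < 3 * (3 * k + a) + (k + b) + 3 by lia.
have := Mcount_balanced R erefl def_n n_ge3 le_d lt_d.
move: abe_in n_ge3; rewrite {}def_n /opt_offsets.
by do ![rewrite in_cons => /predU1P[[-> -> ->] | ]]; rewrite ?in_nil // => n_ge3 M_eq;
  split; lia.
Qed.

Theorem theorem4p2 (R : realType) (n : nat) : (1 <= n)%N ->
  (exists s t : nat, [/\ (1 <= s)%N, (s <= t)%N, (t <= n)%N &
      Mcount (2%:R : R) n s t = ((n ^ 2 + 33 - 10 * n) %/ 44)%N]) /\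
  (forall s t : nat, (1 <= s)%N -> (s <= t)%N -> (t <= n)%N ->
      ((n ^ 2 + 33 - 10 * n) %/ 44 <= Mcount (2%:R : R) n s t)%N).
Proof.
move=> n_gt0; split=> [|s t s_gt0 le_st le_tn]; last by apply: Mcount_lb; rewrite ?s_gt0.
have [n_le2 | n_gt2] := leqP n 2; last exact: Mcount_lb_attained.
by exists 1, 1; rewrite Mcount_small ?n_gt0 //; case: n n_gt0 n_le2 => [|[|[|]]].
Qed.
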